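(* Let $G$ be a bipartite graph with $n$ vertices and $m$ edges, and let $\eta$ be the nullity of $G$. Then $$S_{k}(A(G))\leq \begin{cases} \sqrt{km}, & \text{if } 1\leq k \leq \left\lfloor\frac{n-\eta}{2}\right\rfloor;\\ \sqrt{\left\lfloor\frac{n-\eta}{2}\right\rfloor m}, & \text{if } \left\lfloor\frac{n-\eta}{2}\right\rfloor< k \leq \left\lfloor\frac{n+\eta}{2}\right\rfloor;\\ \sqrt{(n-k)m}, & \text{if } \left\lfloor\frac{n+\eta}{2}\right\rfloor< k \leq n. \end{cases}$$
   Context: All graphs are simple and undirected. $A(G)$ is the adjacency matrix. The nullity of $G$ is the multiplicity of the eigenvalue $0$ of $A(G)$. For a real symmetric matrix $M$ with eigenvalues $\lambda_1(M)\geq\cdots\geq\lambda_n(M)$, $S_k(M)=\sum_{i=1}^k\lambda_i(M)$. *)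

From HB Require Import structures.
From mathcomp Require Import all_boot all_order all_algebra.
From mathcomp Require Import reals.
Set Implicit Arguments. Unset Strict Implicit. Unset Printing Implicit Defensive.
Import Order.TTheory GRing.Theory Num.Theory.
Local Open Scope ring_scope.

Definition simple_graph (n : nat) (e : rel 'I_n) : Prop :=
  (forall i, ~~ e i i) /\ (forall i j, e i j = e j i).

Definition bipartite (n : nat) (e : rel 'I_n) : Prop :=
  exists f : 'I_n -> bool, forall i j, e i j -> f i != f j.

Definition num_edges (n : nat) (e : rel 'I_n) : nat :=
  #|[set p : 'I_n * 'I_n | e p.1 p.2 && (p.1 < p.2)%N]|.

Definition adj_mx (R : nzRingType) (n : nat) (e : rel 'I_n) : 'M[R]_n :=
  \matrix_(i, j) (e i j)%:R.

(* s is the list of eigenvalues of M (with algebraic multiplicity), sorted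
   non-increasingly: lambda_1 >= ... >= lambda_n. *)
Definition sorted_spectrum (R : realType) (n : nat) (M : 'M[R]_n) (s : seq R) : Prop :=
  char_poly M = \prod_(x <- s) ('X - x%:P) /\ sorted (fun x y => y <= x) s.

Definition Sk (R : realType) (s : seq R) (k : nat) : R := \sum_(i < k) s`_i.

Definition nullity_of (R : realType) (s : seq R) : nat := count_mem 0 s.

Definition bound41 (R : realType) (n m eta k : nat) : R :=
  if (k <= (n - eta)./2)%N then Num.sqrt ((k * m)%:R)
  else if (k <= (n + eta)./2)%N then Num.sqrt ((((n - eta)./2) * m)%:R)
  else Num.sqrt (((n - k) * m)%:R).

From mathcomp Require Import all_boot all_order all_algebra.
From mathcomp Require Import reals.
From mathcomp Require Import ring zify.
Set Implicit Arguments. Unset Strict Implicit. Unset Printing Implicit Defensive.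
Import Order.TTheory GRing.Theory Num.Theory.
Local Open Scope ring_scope.

(* Conjugating A(G) by the diagonal sign matrix of a 2-colouring gives -A(G),
   so the spectrum is symmetric under negation: the p positive eigenvalues
   mirror the negative ones, n = 2p + eta, and the squares of the positive
   eigenvalues add up to tr(A^2)/2 = m.  A sum of k eigenvalues is at most the
   sum of its j positive terms, which Cauchy-Schwarz bounds by sqrt(j m) with
   j <= min(k, p); since the whole spectrum sums to 0, it is also minus the sum
   of the remaining n - k eigenvalues, whence the bound sqrt((n - k) m). *)

Lemma prodrN_seq (R : comNzRingType) (T : Type) (r : seq T) (F : T -> R) :
  \prod_(x <- r) - F x = (-1) ^+ size r * \prod_(x <- r) F x.
Proof.
elim: r => [|x r IH]; first by rewrite !big_nil mul1r.
by rewrite !big_cons IH exprS mulN1r; ring.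
Qed.

Section CharPoly.
Variables (R : comNzRingType) (n : nat).
Implicit Types (A P Q : 'M[R]_n) (s : seq R).

Lemma char_poly_conjmx A P Q : P *m Q = 1%:M -> char_poly (P *m A *m Q) = char_poly A.
Proof.
move=> PQ1; rewrite /char_poly.
have PQ1C : map_mx polyC P *m map_mx polyC Q = 1%:M by rewrite -map_mxM PQ1 map_mx1.
have -> : char_poly_mx (P *m A *m Q) = map_mx polyC P *m char_poly_mx A *m map_mx polyC Q.
  rewrite /char_poly_mx mulmxBr mulmxBl -!map_mxM; congr (_ - _).
  by rewrite mul_mx_scalar -scalemxAl PQ1C scalemx1.
by rewrite !det_mulmx mulrAC -det_mulmx PQ1C det1 mul1r.
Qed.

Lemma size_char_poly_roots A s : char_poly A = \prod_(x <- s) ('X - x%:P) -> size s = n.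
Proof. by move=> cpA; have := size_char_poly A; rewrite cpA size_prod_XsubC => -[]. Qed.

Lemma char_poly_comp_oppX A : char_poly A \Po - 'X = (-1) ^+ n * char_poly (- A).
Proof.
rewrite /char_poly -det_map_mx -detZ scaleN1r.
congr (\det _); apply/matrixP => i j; rewrite !mxE.
by case: eqP => _;
  rewrite /= ?mulr1n ?mulr0n comp_polyB ?comp_polyX ?comp_poly0 !comp_polyC polyCN; ring.
Qed.

Lemma char_poly_oppmx A s : char_poly A = \prod_(x <- s) ('X - x%:P) ->
  char_poly (- A) = \prod_(x <- map -%R s) ('X - x%:P).
Proof.
move=> cpA; have size_s := size_char_poly_roots cpA.
apply: (can_inj (signrMK n)); rewrite /= -char_poly_comp_oppX cpA rmorph_prod.
rewrite -size_s big_map -prodrN_seq.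
by apply: eq_bigr => x _; rewrite /= comp_polyB comp_polyX comp_polyC polyCN; ring.
Qed.

Lemma mxtrace_prod_XsubC A s : char_poly A = \prod_(x <- s) ('X - x%:P) ->
  \tr A = \sum_(x <- s) x.
Proof.
move=> cpA; have size_s := size_char_poly_roots cpA.
case: n A cpA size_s => [|n'] A cpA size_s.
  by rewrite (size0nil size_s) big_nil /mxtrace big_ord0.
by apply: oppr_inj; rewrite -char_poly_trace // cpA -size_s coefPn_prod_XsubC // size_s.
Qed.

End CharPoly.

Lemma char_poly_sqrmx (R : idomainType) n (A : 'M[R]_n) s :
  char_poly A = \prod_(x <- s) ('X - x%:P) ->
  char_poly (A *m A) = \prod_(y <- map (fun x => x ^+ 2) s) ('X - y%:P).
Proof.
move=> cpA.
have cpm : map_mx (comp_poly 'X^2) (char_poly_mx (A *m A)) =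
             char_poly_mx A *m char_poly_mx (- A).
  rewrite /char_poly_mx map_mxN opprK mulmxDr !mulmxBl !mul_mx_scalar mul_scalar_mx.
  rewrite addrA subrK -map_mxM; apply/matrixP => i j; rewrite !mxE.
  by case: eqP => _; rewrite /= ?mulr1n ?mulr0n ?mulr0 ?mulr1 comp_polyB comp_polyC
                             ?comp_polyX ?comp_poly0 ?comp_Xn_poly -?expr2.
have comp_eq : char_poly (A *m A) \Po 'X^2 =
               (\prod_(y <- map (fun x => x ^+ 2) s) ('X - y%:P)) \Po 'X^2.
  rewrite /char_poly -det_map_mx cpm det_mulmx -!/(char_poly _) (char_poly_oppmx cpA) cpA.
  rewrite !big_map -big_split rmorph_prod; apply: eq_bigr => x _.
  by rewrite /= comp_polyB comp_polyC comp_polyX polyCN rmorphXn; ring.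
apply/eqP; rewrite -subr_eq0 -(@comp_poly_eq0 _ _ 'X^2) ?size_polyXn //.
by rewrite comp_polyB comp_eq subrr.
Qed.

Section AdjacencyMatrix.
Variables (n : nat) (e : rel 'I_n).

Lemma char_poly_adj_mxN (R : comNzRingType) :
  bipartite e -> char_poly (- adj_mx R e) = char_poly (adj_mx R e).
Proof.
case=> side e_side; pose D := diag_mx (\row_i ((-1) ^+ side i : R)).
have DD1 : D *m D = 1%:M.
  by apply/matrixP => i j; rewrite mulmx_diag !mxE -expr2 sqrr_sign.
have DAD : D *m adj_mx R e *m D = - adj_mx R e.
  rewrite mul_diag_mx mul_mx_diag; apply/matrixP => i j; rewrite !mxE.
  case eij : (e i j); last by rewrite mulr0 mul0r oppr0.
  by move: (e_side i j eij); case: (side i); case: (side j);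
    rewrite //= ?mulN1r ?mulrN1 ?mul1r ?mulr1.
by rewrite -DAD char_poly_conjmx.
Qed.

Lemma double_num_edges : simple_graph e ->
  ((num_edges e).*2 = \sum_i \sum_j (e i j : nat))%N.
Proof.
case=> irr sym.
have edges_lt : num_edges e = (\sum_i \sum_j (e i j && (i < j)%N : nat))%N.
  rewrite /num_edges -sum1_card big_mkcond /= pair_big; apply: eq_bigr => p _.
  by rewrite inE; case: (_ && _).
have edges_gt : num_edges e = (\sum_i \sum_j (e i j && (j < i)%N : nat))%N.
  by rewrite edges_lt exchange_big; apply: eq_bigr => i _; apply: eq_bigr => j _; rewrite sym.
rewrite -addnn {1}edges_lt edges_gt -big_split; apply: eq_bigr => i _.
rewrite -big_split; apply: eq_bigr => j _ /=.
case: (ltngtP i j) => [|/=|/val_inj ->]; rewrite ?andbT ?andbF ?addn0 //.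
by rewrite (negbTE (irr j)).
Qed.

Lemma mxtrace_adj_mx_sqr (R : nzRingType) : simple_graph e ->
  \tr (adj_mx R e *m adj_mx R e) = (2 * num_edges e)%:R.
Proof.
move=> sg; rewrite mul2n double_num_edges // /mxtrace natr_sum; apply: eq_bigr => i _.
rewrite mxE natr_sum; apply: eq_bigr => j _; rewrite !mxE (proj2 sg j i).
by case: (e i j); rewrite ?mulr1 ?mulr0.
Qed.

End AdjacencyMatrix.

Section RealSeq.
Variable R : rcfType.
Implicit Types (t : seq R) (M : R).

Lemma sum_const_seq t (c : R) : \sum_(x <- t) c = c *+ size t.
Proof. by rewrite big_const_seq count_predT iter_addr_0. Qed.

Lemma sqr_sum_le_size_sum_sqr t :
  (\sum_(x <- t) x) ^+ 2 <= (size t)%:R * \sum_(x <- t) x ^+ 2.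
Proof.
set S := \sum_(x <- t) x; set Q := \sum_(x <- t) x ^+ 2.
have : 0 <= \sum_(x <- t) \sum_(y <- t) (x - y) ^+ 2.
  by do 2![apply: sumr_ge0 => ? _]; apply: sqr_ge0.
have -> : \sum_(x <- t) \sum_(y <- t) (x - y) ^+ 2 = ((size t)%:R * Q - S ^+ 2) *+ 2.
  have inner x : \sum_(y <- t) (x - y) ^+ 2 = x ^+ 2 *+ size t - (x * S) *+ 2 + Q.
    rewrite (eq_bigr _ (fun y _ => sqrrB x y)) big_split /= sumrB /=.
    by rewrite sum_const_seq sumrMnl -mulr_sumr.
  rewrite (eq_bigr _ (fun x _ => inner x)) big_split /= sumrB /=.
  by rewrite sum_const_seq 2!sumrMnl -mulr_suml -/S -/Q; ring.
by rewrite pmulrn_lge0 // subr_ge0.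
Qed.

Lemma sum_le_sqrt_count_pos t (j : nat) M :
  (count (> 0%R) t <= j)%N -> \sum_(x <- t | 0 < x) x ^+ 2 <= M ->
  \sum_(x <- t) x <= Num.sqrt (j%:R * M).
Proof.
move=> cnt_le sqr_le; set u := [seq x <- t | 0 < x].
have sum_le : \sum_(x <- t) x <= \sum_(x <- u) x.
  rewrite big_filter (bigID (> 0)) /= gerDl.
  by apply: sumr_le0 => x; rewrite leNgt.
have u_ge0 : 0 <= \sum_(x <- u) x by rewrite big_filter; apply: sumr_ge0 => x /ltW.
apply: (le_trans sum_le); rewrite -(ger0_norm u_ge0) -sqrtr_sqr; apply: ler_wsqrtr.
apply: (le_trans (sqr_sum_le_size_sum_sqr u)); apply: ler_pM => //.
- by apply: sumr_ge0 => x _; apply: sqr_ge0.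
- by rewrite ler_nat size_filter.
- by rewrite big_filter.
Qed.

Section SymmetricSeq.
Variable s : seq R.
Hypothesis s_sym : perm_eq s (map -%R s).

Lemma sum_sym : \sum_(x <- s) x = 0.
Proof.
by apply/eqP; rewrite -eqNr [X in _ == X](perm_big _ s_sym) big_map sumrN.
Qed.

Lemma count_pos_sym : count (> 0) s = count (< 0) s.
Proof. by rewrite (permP s_sym) count_map; apply: eq_count => x /=; rewrite oppr_gt0. Qed.

Lemma size_sym : size s = ((count (> 0%R) s).*2 + count_mem 0%R s)%N.
Proof.
have sign_split (r : seq R) : size r = (count (> 0%R) r + count (< 0%R) r + count_mem 0%R r)%N.
  by elim: r => //= x r ->; case: (ltgtP x 0) => /=; lia.
by rewrite sign_split -count_pos_sym addnn.
Qed.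

Lemma sum_sqr_pos_sym : (\sum_(x <- s | 0 < x) x ^+ 2) *+ 2 = \sum_(x <- s) x ^+ 2.
Proof.
have neg : \sum_(x <- s | 0 < x) x ^+ 2 = \sum_(x <- s | x < 0) x ^+ 2.
  rewrite (perm_big _ s_sym) big_map.
  by apply: eq_big => x; rewrite ?oppr_gt0 // sqrrN.
rewrite mulr2n {2}neg [RHS](bigID (> 0)) /=; congr (_ + _).
rewrite [RHS](bigID (< 0)) /= [X in _ + X]big1 ?addr0.
  by apply: eq_bigl => x; case: ltgtP.
by move=> x; case: ltgtP => // <- _; rewrite expr0n.
Qed.

End SymmetricSeq.
End RealSeq.

Lemma Sk_take (R : realType) (s : seq R) k :
  (k <= size s)%N -> Sk s k = \sum_(x <- take k s) x.
Proof.
move=> ks; rewrite /Sk (big_nth 0) size_takel // big_mkord.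
by apply: eq_bigr => i _; rewrite nth_take.
Qed.

Lemma Sk_le_bound41 (R : realType) (s : seq R) (m k : nat) :
  perm_eq s (map -%R s) -> \sum_(x <- s) x ^+ 2 = (2 * m)%:R -> (k <= size s)%N ->
  Sk s k <= bound41 R (size s) m (nullity_of s) k.
Proof.
move=> s_sym sqr_sum ks.
have pos_sqr_le u v : perm_eq (u ++ v) s -> \sum_(x <- u | 0 < x) x ^+ 2 <= m%:R.
  have pos_sqr : \sum_(x <- s | 0 < x) x ^+ 2 = m%:R.
    by apply: (@pmulrnI _ 2) => //; rewrite sum_sqr_pos_sym // sqr_sum natrM mulr_natl.
  move=> uv; rewrite -pos_sqr -(perm_big _ uv) big_cat /= lerDl.
  by apply: sumr_ge0 => x _; apply: sqr_ge0.
have prefix_bound j : (count (> 0%R) (take k s) <= j)%N -> Sk s k <= Num.sqrt ((j * m)%:R).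
  move=> cnt; rewrite Sk_take // natrM; apply: sum_le_sqrt_count_pos cnt _.
  by apply: (pos_sqr_le _ (drop k s)); rewrite cat_take_drop.
have suffix_bound : Sk s k <= Num.sqrt (((size s - k) * m)%:R).
  have -> : Sk s k = \sum_(x <- map -%R (drop k s)) x.
    apply/eqP; rewrite Sk_take // big_map sumrN -addr_eq0 -big_cat cat_take_drop.
    by rewrite sum_sym.
  rewrite natrM; apply: sum_le_sqrt_count_pos.
    by rewrite (leq_trans (count_size _ _)) // size_map size_drop.
  apply: (pos_sqr_le _ (map -%R (take k s))); rewrite perm_catC -map_cat cat_take_drop.
  by rewrite perm_sym.
have size_s := size_sym s_sym; set p := count _ s in size_s.
have half_lo : ((size s - nullity_of s)./2 = p)%N by rewrite size_s addnK doubleK.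
have half_hi : ((size s + nullity_of s)./2 = p + nullity_of s)%N.
  by rewrite size_s -addnA addnn -doubleD doubleK.
rewrite /bound41 half_lo half_hi; case: ifP => [k_le_p|_].
  by apply: prefix_bound; rewrite (leq_trans (count_size _ _)) // size_take_min geq_minl.
case: ifP => // _; apply: prefix_bound.
by rewrite /p -{2}(cat_take_drop k s) count_cat leq_addr.
Qed.

Theorem theorem4p1 (R : realType) (n : nat) (e : rel 'I_n) (s : seq R) (k : nat) :
  simple_graph e -> bipartite e ->
  sorted_spectrum (adj_mx R e) s ->
  (1 <= k <= n)%N ->
  Sk s k <= bound41 R n (num_edges e) (nullity_of s) k.
Proof.
move=> simple_e bip_e [cpA _] /andP[_ k_le_n].
have size_s : size s = n := size_char_poly_roots cpA.
have s_sym : perm_eq s (map -%R s).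
  by rewrite perm_sym; apply: prod_XsubC_eq; rewrite -(char_poly_oppmx cpA) char_poly_adj_mxN.
have sqr_sum : \sum_(x <- s) x ^+ 2 = (2 * num_edges e)%:R.
  by rewrite -mxtrace_adj_mx_sqr // (mxtrace_prod_XsubC (char_poly_sqrmx cpA)) big_map.
by have := Sk_le_bound41 s_sym sqr_sum; rewrite size_s; apply.
Qed.
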